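(* Let $p=p(n)\in(0,1)$ satisfy $p(n)\log n\to 0$ as $n\to\infty$, and let $G\sim D(n,p)$. Then with probability $1-o(1)$ the number of sources of $G$ is at most $5/p$.
   Context: $D(n,p)$ is the distribution on DAGs with vertex set $\{1,\dots,n\}$ assigning each DAG with $e$ edges probability proportional to $(p/(1-p))^e$. A source is a vertex with no incoming edges. *)

From HB Require Import structures.
From mathcomp Require Import all_boot all_order all_algebra.
From mathcomp Require Import all_classical all_reals all_analysis.
Set Implicit Arguments. Unset Strict Implicit. Unset Printing Implicit Defensive.
Import Order.TTheory GRing.Theory Num.Theory.
Local Open Scope ring_scope.

Definition digraph (n : nat) := {set 'I_n * 'I_n}.

Definition adj (n : nat) (G : digraph n) : rel 'I_n := fun u v => (u, v) \in G.

Definition is_dag (n : nat) (G : digraph n) : bool :=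
  [forall u : 'I_n, forall v : 'I_n, ~~ (adj G u v && connect (adj G) v u)].

Definition sources (n : nat) (G : digraph n) : {set 'I_n} :=
  [set v : 'I_n | [forall u : 'I_n, ~~ adj G u v]].

(* weight of a DAG under D(n,p): (p/(1-p))^(#edges) *)
Definition dag_weight (R : realType) (n : nat) (p : R) (G : digraph n) : R :=
  (p / (1 - p)) ^+ #|G|.

Definition DProb (R : realType) (n : nat) (p : R) (A : pred (digraph n)) : R :=
  (\sum_(G : digraph n | is_dag G && A G) dag_weight p G) /
  (\sum_(G : digraph n | is_dag G) dag_weight p G).

(* Let W(S) be the D(n,p)-weight of the DAGs in which every vertex of S is a
   source, and q = p/(1-p). Fix v outside S, let N be the number of vertices
   outside S and v, and split a DAG into its edges at v and the rest H. If v is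
   also a source, all its edges go out to these N vertices, so given H they
   weigh at most (1+q)^N. Conversely, in a topological order of H, v may be
   placed first, or right after any of the N free vertices u with the edge
   u -> v present; the latter families are disjoint and weigh
   (1+q)^N - (1+q)^(N-1) each. Hence W(S + v) (1 + N p) <= W(S), and iterating
   bounds the expected falling factorial (X)_k of the number X of sources by
   p^-k. For k ~ 2/p and m ~ 5/p, Markov's inequality gives
   P(X > 5/p) <= 2^-k <= p/2, which vanishes because p log n -> 0. *)

From mathcomp Require Import all_boot all_order all_algebra.
From mathcomp Require Import all_classical all_reals all_analysis.
From mathcomp Require Import zify ring lra.
(* Re-imported so that finset's notations and lemmas shadow classical_sets'. *)
From mathcomp Require Import fintype finset.
Import Order.TTheory GRing.Theory Num.Theory numFieldNormedType.Exports.
Set Implicit Arguments. Unset Strict Implicit. Unset Printing Implicit Defensive.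
Local Open Scope ring_scope.

Lemma adjU n (G1 G2 : digraph n) x y :
  adj (G1 :|: G2) x y = adj G1 x y || adj G2 x y.
Proof. by rewrite /adj inE. Qed.

Lemma sourcesP n (G : digraph n) v :
  reflect (forall u, ~~ adj G u v) (v \in sources G).
Proof. by rewrite inE; apply: forallP. Qed.

Lemma ranked_dag n (G : digraph n) (f : 'I_n -> nat) :
  (forall x y, adj G x y -> f x < f y)%N -> is_dag G.
Proof.
move=> f_mono; apply/forallP => u; apply/forallP => v.
apply/negP => /andP[uv /connectP[s path_vu last_u]].
suff : (f v <= f u)%N by have := f_mono _ _ uv; lia.
elim: s v path_vu last_u {uv} => [|y s IHs] w /=; first by move=> _ ->.
move=> /andP[wy path_y] last_u.
have := IHs y path_y last_u; have := f_mono _ _ wy; lia.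
Qed.

Lemma dag_ranked n (G : digraph n) : is_dag G ->
  exists2 f : 'I_n -> nat, injective f & (forall x y, adj G x y -> f x < f y)%N.
Proof.
move=> dagG.
pose anc x := [set z | connect (adj G) z x].
exists (fun x => #|anc x| * n + x)%N.
  move=> x y /(congr1 (modn^~ n)).
  by rewrite !modnMDl !modn_small // => /val_inj.
move=> x y xy.
have anc_xy : anc x \proper anc y.
  apply/properP; split.
    apply/subsetP => z; rewrite !inE => zx.
    exact: connect_trans zx (connect1 xy).
  exists y; first by rewrite inE connect0.
  rewrite inE; apply/negP => yx.
  by move: dagG => /forallP/(_ x)/forallP/(_ y); rewrite xy yx.
have : (#|anc x|.+1 * n <= #|anc y| * n)%N.
  by rewrite leq_mul2r proper_card ?orbT.
have := ltn_ord x; rewrite mulSn; lia.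
Qed.

Lemma sub_dag n (G H : digraph n) : H \subset G -> is_dag G -> is_dag H.
Proof.
move=> /subsetP HG /dag_ranked[f _ f_mono].
by apply: (@ranked_dag _ _ f) => x y /HG /f_mono.
Qed.

Section SubsetSums.
Variable T : finType.

Lemma sum_subset_powers (R : comPzSemiRingType) (B : {set T}) (q : R) :
  \sum_(E : {set T} | E \subset B) q ^+ #|E| = (1 + q) ^+ #|B|.
Proof.
have := bigA_distr 1 +%R (fun i => if i \in B then q else 0) (fun _ => 1).
have -> : \prod_i ((if i \in B then q else 0) + 1) = \prod_(i in B) (1 + q).
  rewrite [RHS]big_mkcond; apply: eq_bigr => i _.
  by case: (i \in B); rewrite ?add0r // addrC.
rewrite prodr_const => ->.
rewrite [LHS]big_mkcond; apply: eq_bigr => J _.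
have [JB|] := boolP (J \subset B).
  rewrite -prodr_const [LHS]big_mkcond; apply: eq_bigr => i _.
  by have [/(subsetP JB) ->|] := boolP (i \in J).
case/subsetPn => i iJ iNB.
by rewrite (bigD1 i) //= iJ (negbTE iNB) mul0r.
Qed.

Variable V : nmodType.

Lemma sum_set_splitD (A : {set T}) (F : {set T} -> V) :
  \sum_(G : {set T}) F G =
  \sum_(H : {set T} | H \subset ~: A) \sum_(E : {set T} | E \subset A) F (H :|: E).
Proof.
rewrite pair_big_dep /=.
rewrite (reindex_onto (fun HE : {set T} * {set T} => HE.1 :|: HE.2)
                      (fun G => (G :\: A, G :&: A))) /=; last first.
  by move=> G _; rewrite setUC setID.
apply: eq_bigl => [[H E]] /=; apply/eqP/andP => [[<- <-]|[HA EA]].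
  by rewrite subsetDr subsetIr.
have disj_HA : [disjoint H & A] by rewrite disjoints_subset.
rewrite setDUl setIUl (setDidPl disj_HA) (setIidPl EA) (disjoint_setI0 disj_HA).
have /eqP -> : E :\: A == set0 by rewrite setD_eq0.
by rewrite setU0 set0U.
Qed.

Lemma sum_subset_mkcond (A B : {set T}) (F : {set T} -> V) : B \subset A ->
  \sum_(E : {set T} | E \subset A) (if E \subset B then F E else 0) =
  \sum_(E : {set T} | E \subset B) F E.
Proof.
move=> BA; rewrite -big_mkcondr /=; apply: eq_bigl => E.
by apply/andP/idP => [[]//|EB]; split=> //; apply: subset_trans BA.
Qed.

End SubsetSums.

Definition has_sources n (S : {set 'I_n}) (G : digraph n) :=
  is_dag G && (S \subset sources G).

Section Insertion.
Variables (n : nat) (v : 'I_n) (S : {set 'I_n}).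

Definition star : digraph n := [set e | (e.1 == v) || (e.2 == v)].
Definition free_vertices : {set 'I_n} := ~: (v |: S).
Definition out_star : digraph n := [set (v, w) | w in free_vertices].

Lemma in_free_vertices w : (w \in free_vertices) = (w != v) && (w \notin S).
Proof. by rewrite !inE negb_or. Qed.

Lemma out_star_sub : out_star \subset star.
Proof. by apply/subsetP => e /imsetP[w _ ->]; rewrite inE eqxx. Qed.

Lemma card_out_star : #|out_star| = #|free_vertices|.
Proof. by rewrite card_imset // => a b [->]. Qed.

Lemma has_sources_setU1 (H E : digraph n) : E \subset star ->
  has_sources (v |: S) (H :|: E) -> has_sources S H && (E \subset out_star).
Proof.
move=> E_star /andP[dagHE /subsetP srcHE].
have H_src s : s \in v |: S -> forall u, ~~ adj (H :|: E) u s.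
  by move=> /srcHE /sourcesP.
rewrite -andbA; apply/and3P; split.
- exact: sub_dag (subsetUl H E) dagHE.
- apply/subsetP => s sS; apply/sourcesP => u.
  by have := H_src s (setU1r v sS) u; rewrite adjU negb_or => /andP[].
apply/subsetP => -[a b] ab.
have b_free : b \in free_vertices.
  rewrite inE; apply/negP => /H_src/(_ a).
  by rewrite adjU /adj ab orbT.
have := subsetP E_star _ ab; rewrite inE /= => /orP[/eqP a_v|/eqP b_v].
  by apply/imsetP; exists b; rewrite // a_v.
by move: b_free; rewrite in_free_vertices b_v eqxx.
Qed.

(* [v] gets rank [c] and every other vertex [x] rank [2 f x + 2], so [c] only
   has to lie strictly between the ranks of the in- and out-neighbours of [v]. *)
Lemma has_sources_insert (H E : digraph n) (f : 'I_n -> nat) (c : nat) :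
  v \notin S -> H \subset ~: star -> has_sources S H ->
  (forall x y, adj H x y -> f x < f y)%N ->
  (forall e, e \in E ->
     [&& e.1 == v, e.2 \in free_vertices & c < (f e.2).*2.+2]%N ||
     [&& e.2 == v, e.1 \in free_vertices & (f e.1).*2.+2 < c]%N) ->
  has_sources S (H :|: E).
Proof.
move=> vNS /subsetP H_nstar /andP[_ /subsetP srcH] f_mono E_slot.
apply/andP; split.
  pose g x := if x == v then c else (f x).*2.+2.
  apply: (@ranked_dag _ _ g) => x y; rewrite adjU => /orP[xy|/E_slot /=].
    have := H_nstar _ xy; rewrite !inE /= negb_or => /andP[xNv yNv].
    by rewrite /g (negbTE xNv) (negbTE yNv); have := f_mono _ _ xy; lia.
  case/orP => /and3P[/eqP-> + ?]; rewrite in_free_vertices => /andP[/negbTE Nv _];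
    by rewrite /g eqxx Nv.
apply/subsetP => s sS; apply/sourcesP => u; rewrite adjU negb_or.
apply/andP; split; first by have /sourcesP := srcH s sS.
apply/negP => /E_slot /= /orP[/and3P[_ + _]|/and3P[/eqP s_v _ _]].
  by rewrite in_free_vertices sS andbF.
by rewrite -s_v sS in vNS.
Qed.

Section Slots.
Variable f : 'I_n -> nat.

(* The edges at [v] when [v] is placed right after [u] in the order [f]:
   one from each earlier free vertex, one to each later free vertex. *)
Definition slot_edges (u : 'I_n) : digraph n :=
  [set (w, v) | w in [set w in free_vertices | f w <= f u]%N] :|:
  [set (v, w) | w in [set w in free_vertices | f u < f w]%N].

Lemma slot_edges_sub u : slot_edges u \subset star.
Proof.
by apply/subsetP => e; rewrite inE => /orP[] /imsetP[w _ ->]; rewrite inE eqxx ?orbT.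
Qed.

Lemma mem_slot_edges u : u \in free_vertices -> (u, v) \in slot_edges u.
Proof.
move=> u_free; rewrite inE; apply/orP; left.
by apply/imsetP; exists u; rewrite // inE u_free leqnn.
Qed.

Lemma slot_edges_before u x : (x, v) \in slot_edges u -> x \in free_vertices ->
  (f x <= f u)%N.
Proof.
rewrite inE => /orP[/imsetP[w + [-> _]]|/imsetP[w _ [-> _]]].
  by rewrite inE => /andP[].
by rewrite in_free_vertices eqxx.
Qed.

Lemma card_slot_edges u : #|slot_edges u| = #|free_vertices|.
Proof.
rewrite cardsU.
have -> : [set (w, v) | w in [set w in free_vertices | f w <= f u]%N] :&:
          [set (v, w) | w in [set w in free_vertices | f u < f w]%N] = set0.
  apply/setP => e; rewrite !inE; apply/negP.
  move=> /andP[/imsetP[w + ->] /imsetP[w' _ [w_v _]]].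
  by rewrite inE w_v in_free_vertices eqxx.
rewrite cards0 subn0 !card_imset; try by move=> a b [].
rewrite -(cardsID [set w | f w <= f u]%N free_vertices).
by congr (_ + _)%N; apply: eq_card => w; rewrite !inE ?ltnNge andbC.
Qed.

Lemma slot_edges_inj u u' (E : digraph n) : injective f ->
  u \in free_vertices -> u' \in free_vertices ->
  E \subset slot_edges u -> E \subset slot_edges u' ->
  (u, v) \in E -> (u', v) \in E -> u = u'.
Proof.
move=> f_inj u_free u'_free /subsetP E_u /subsetP E_u' uv u'v.
apply: f_inj; apply/eqP; rewrite eqn_leq.
by rewrite (slot_edges_before (E_u _ u'v)) ?(slot_edges_before (E_u' _ uv)).
Qed.

Hypothesis vNS : v \notin S.
Variable H : digraph n.
Hypotheses (H_nstar : H \subset ~: star) (srcH : has_sources S H).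
Hypothesis f_mono : forall x y, adj H x y -> (f x < f y)%N.

Lemma has_sources_out_star (E : digraph n) :
  E \subset out_star -> has_sources S (H :|: E).
Proof.
move=> /subsetP E_out; apply: (@has_sources_insert _ _ f 0) => // e.
by move=> /E_out /imsetP[w w_free ->]; rewrite /= eqxx w_free.
Qed.

Lemma has_sources_slot u (E : digraph n) :
  E \subset slot_edges u -> has_sources S (H :|: E).
Proof.
move=> /subsetP E_u; apply: (@has_sources_insert _ _ f (f u).*2.+3) => // e.
move=> /E_u; rewrite inE => /orP[] /imsetP[w + ->] /=;
  rewrite inE => /andP[-> w_u]; rewrite eqxx /= ?orbT; lia.
Qed.

End Slots.

End Insertion.

Section SourceWeight.
Variables (R : realFieldType) (n : nat) (q : R).
Hypothesis q_ge0 : 0 <= q.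

Definition source_weight (S : {set 'I_n}) : R :=
  \sum_(G : digraph n | has_sources S G) q ^+ #|G|.

Lemma insertion_weight_identity (k : nat) :
  (1 + q) ^+ k * (1 + k%:R * (q / (1 + q))) =
  (1 + q) ^+ k + ((1 + q) ^+ k - (1 + q) ^+ k.-1) *+ k.
Proof.
have q1_neq0 : 1 + q != 0 by rewrite gt_eqF // ltr_wpDr.
case: k => [|k]; first by rewrite expr0 mulr0n addr0 mul1r mul0r addr0.
by rewrite exprS /= -mulr_natl; field.
Qed.

Variables (v : 'I_n) (S : {set 'I_n}).
Hypothesis vNS : v \notin S.
Local Notation N := #|free_vertices v S|.

Lemma card_setU_star (H E : digraph n) : H \subset ~: star v -> E \subset star v ->
  #|H :|: E| = (#|H| + #|E|)%N.
Proof.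
move=> H_nstar E_star; apply/eqP; rewrite (leq_card_setU H E).2.
by apply: disjointWr E_star _; rewrite disjoints_subset.
Qed.

Lemma sum_out_star :
  \sum_(E : digraph n | E \subset star v) q ^+ #|E| * (E \subset out_star v S)%:R =
  (1 + q) ^+ N.
Proof.
rewrite -card_out_star -sum_subset_powers -(sum_subset_mkcond _ (out_star_sub v S)).
by apply: eq_bigr => E _; case: ifP; rewrite ?mulr1 ?mulr0.
Qed.

Lemma sum_slot_edges (f : 'I_n -> nat) u : u \in free_vertices v S ->
  \sum_(E : digraph n | E \subset star v)
     q ^+ #|E| * ((E \subset slot_edges v S f u) && ((u, v) \in E))%:R =
  (1 + q) ^+ N - (1 + q) ^+ N.-1.
Proof.
move=> u_free; set slot := slot_edges v S f u.
have slot_split := sum_subset_powers slot q.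
rewrite (bigID (fun E : digraph n => (u, v) \in E)) /= card_slot_edges in slot_split.
have slot_without :
    \sum_(E : digraph n | (E \subset slot) && ((u, v) \notin E)) q ^+ #|E| =
    (1 + q) ^+ N.-1.
  rewrite -(card_slot_edges v S f u) (cardsD1 (u, v)) mem_slot_edges //.
  by rewrite -sum_subset_powers; apply: eq_bigl => E; rewrite subsetD1.
rewrite slot_without in slot_split.
rewrite -slot_split addrK [RHS]big_mkcondr /=.
rewrite -(sum_subset_mkcond _ (slot_edges_sub v S f u)).
by apply: eq_bigr => E _; case: (E \subset slot); case: ((u, v) \in E);
  rewrite /= ?mulr1 ?mulr0.
Qed.

Lemma sum_star_setU1_le (H : digraph n) : H \subset ~: star v ->
  \sum_(E : digraph n | E \subset star v)
     (if has_sources (v |: S) (H :|: E) then q ^+ #|H :|: E| else 0)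
  <= (if has_sources S H then q ^+ #|H| * (1 + q) ^+ N else 0).
Proof.
move=> H_nstar; have [srcH|NsrcH] := boolP (has_sources S H); last first.
  rewrite big1 // => E E_star; case: ifP => // /(has_sources_setU1 E_star).
  by rewrite (negbTE NsrcH).
rewrite -sum_out_star mulr_sumr; apply: ler_sum => E E_star.
case: ifP => [/(has_sources_setU1 E_star)/andP[_ ->]|_].
  by rewrite card_setU_star // exprD mulr1.
by rewrite !mulr_ge0 ?exprn_ge0 ?ler0n.
Qed.

Lemma weight_setU_star_ge (f : 'I_n -> nat) (H E : digraph n) : injective f ->
  H \subset ~: star v -> has_sources S H ->
  (forall x y, adj H x y -> f x < f y)%N -> E \subset star v ->
  q ^+ #|H| * (q ^+ #|E| * ((E \subset out_star v S)%:R +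
     \sum_(u in free_vertices v S)
        ((E \subset slot_edges v S f u) && ((u, v) \in E))%:R))
  <= (if has_sources S (H :|: E) then q ^+ #|H :|: E| else 0).
Proof.
move=> f_inj H_nstar srcH f_mono E_star.
have [E_out|_] := boolP (E \subset out_star v S).
  rewrite big1 ?addr0 ?mulr1 => [|u u_free]; last first.
    apply/eqP; rewrite pnatr_eq0 eqb0; apply/negP.
    move=> /andP[_ /(subsetP E_out)/imsetP[w _ [u_v _]]].
    by move: u_free; rewrite u_v in_free_vertices eqxx.
  rewrite (has_sources_out_star vNS H_nstar srcH f_mono E_out).
  by rewrite card_setU_star // exprD.
rewrite add0r.
pose slot_of u :=
  [&& u \in free_vertices v S, E \subset slot_edges v S f u & (u, v) \in E].
have [u /and3P[u_free E_u uv]|no_slot] := pickP slot_of; last first.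
  rewrite big1 ?mulr0 => [|u u_free]; first by case: ifP; rewrite ?exprn_ge0.
  by have := no_slot u; rewrite /slot_of u_free /= => ->.
rewrite (bigD1 u) //= E_u uv big1 ?addr0 ?mulr1 => [|u' /andP[u'_free u'Nu]].
  by rewrite (has_sources_slot vNS H_nstar srcH f_mono E_u) card_setU_star // exprD.
apply/eqP; rewrite pnatr_eq0 eqb0; apply/negP => /andP[E_u' u'v].
by rewrite (slot_edges_inj f_inj u'_free u_free E_u' E_u u'v uv) eqxx in u'Nu.
Qed.

Lemma sum_star_setU_ge (H : digraph n) : H \subset ~: star v -> has_sources S H ->
  q ^+ #|H| * ((1 + q) ^+ N * (1 + N%:R * (q / (1 + q))))
  <= \sum_(E : digraph n | E \subset star v)
       (if has_sources S (H :|: E) then q ^+ #|H :|: E| else 0).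
Proof.
move=> H_nstar srcH; have /andP[dagH _] := srcH.
have [f f_inj f_mono] := dag_ranked dagH.
apply: le_trans (ler_sum _ (fun E => weight_setU_star_ge f_inj H_nstar srcH f_mono)).
rewrite -mulr_sumr ler_wpM2l ?exprn_ge0 //.
under eq_bigr => E _ do rewrite mulrDr mulr_sumr.
rewrite big_split /= sum_out_star exchange_big /=.
rewrite (eq_bigr (fun _ => (1 + q) ^+ N - (1 + q) ^+ N.-1)) => [|u].
  by rewrite sumr_const insertion_weight_identity.
exact: sum_slot_edges.
Qed.

Lemma source_weight_setU1 :
  source_weight (v |: S) * (1 + N%:R * (q / (1 + q))) <= source_weight S.
Proof.
rewrite /source_weight !(big_mkcond (has_sources _)) !(sum_set_splitD (star v)).
rewrite mulr_suml; apply: ler_sum => H H_nstar.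
have factor_ge0 : 0 <= 1 + N%:R * (q / (1 + q)).
  by rewrite addr_ge0 // mulr_ge0 // divr_ge0 // addr_ge0.
apply: le_trans (ler_wpM2r factor_ge0 (sum_star_setU1_le H_nstar)) _.
case: ifP => [srcH|_]; first by rewrite -mulrA sum_star_setU_ge.
by rewrite mul0r sumr_ge0 // => E _; case: ifP; rewrite ?exprn_ge0.
Qed.

End SourceWeight.

Lemma prodr_const_ord (R : pzSemiRingType) (k : nat) (x : R) :
  \prod_(i < k) x = x ^+ k.
Proof. by rewrite prodr_const card_ord. Qed.

Section SourceMoments.
Variables (R : realFieldType) (n : nat) (q : R).
Hypothesis q_ge0 : 0 <= q.
Local Notation r := (q / (1 + q)).
Local Notation Z := (source_weight q (set0 : {set 'I_n})).

Lemma prob_of_odds_ge0 : 0 <= r.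
Proof. by rewrite divr_ge0 // addr_ge0. Qed.

Lemma prob_of_odds_le1 : r <= 1.
Proof. by rewrite ler_pdivrMr ?mul1r ?lerDr // ltr_wpDr. Qed.

Definition insertion_factor (k : nat) : R :=
  \prod_(i < k) (1 + (n - 1 - i)%N%:R * r).

Lemma insertion_factor_gt0 k : 0 < insertion_factor k.
Proof.
apply: prodr_gt0 => i _; apply: lt_le_trans (ler_wpDr _ (lexx 1)) => //.
by rewrite mulr_ge0 ?prob_of_odds_ge0.
Qed.

Lemma source_weight_card_le (S : {set 'I_n}) :
  source_weight q S * insertion_factor #|S| <= Z.
Proof.
suff bound k (T : {set 'I_n}) :
  #|T| = k -> source_weight q T * insertion_factor k <= Z by exact: bound.
elim: k {S} T => [|k IHk] S cardS.
  by rewrite (cards0_eq cardS) /insertion_factor big_ord0 mulr1.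
have /set0Pn[v vS] : S != set0 by rewrite -card_gt0 cardS.
have cardSv : #|S :\ v| = k by move: cardS; rewrite (cardsD1 v) vS add1n => -[].
have vNSv : v \notin S :\ v by rewrite !inE eqxx.
have := source_weight_setU1 q_ge0 vNSv; rewrite setD1K //.
have -> : #|free_vertices v (S :\ v)| = (n - 1 - k)%N.
  by rewrite /free_vertices setD1K // cardsCs setCK card_ord cardS; lia.
move=> step; apply: le_trans (IHk _ cardSv).
rewrite /insertion_factor big_ord_recr /= -/(insertion_factor k) mulrA mulrAC.
by apply: ler_wpM2r => //; apply: ltW (insertion_factor_gt0 k).
Qed.

Lemma source_weight0 : Z = \sum_(G : digraph n | is_dag G) q ^+ #|G|.
Proof. by apply: eq_bigl => G; rewrite /has_sources sub0set andbT. Qed.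

Lemma sum_source_weight_card k :
  \sum_(S : {set 'I_n} | #|S| == k) source_weight q S =
  \sum_(G : digraph n | is_dag G) q ^+ #|G| * 'C(#|sources G|, k)%:R.
Proof.
rewrite /source_weight; under eq_bigr => S _ do rewrite big_mkcond /=.
rewrite exchange_big /= [RHS]big_mkcond /=; apply: eq_bigr => G _.
rewrite /has_sources; case: (is_dag G) => /=; last by rewrite big1.
rewrite -big_mkcondr /= -cards_draws mulr_natr -sumr_const.
by apply: eq_bigl => S; rewrite !inE andbC.
Qed.

Lemma ffact_le_insertion_factor k : (n ^_ k)%:R * r ^+ k <= insertion_factor k.
Proof.
rewrite ffact_prod natr_prod -prodr_const_ord -big_split /=.
apply: ler_prod => i _; rewrite mulr_ge0 ?prob_of_odds_ge0 //=.
have [i_lt_n|n_le_i] := ltnP i n.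
  have -> : (n - i)%N = ((n - 1 - i) + 1)%N by lia.
  by rewrite natrD mulrDl mul1r addrC lerD2r prob_of_odds_le1.
have -> : (n - i)%N = 0%N by lia.
by rewrite mul0r addr_ge0 // mulr_ge0 ?prob_of_odds_ge0.
Qed.

Lemma binomial_moment_le k :
  (\sum_(G : digraph n | is_dag G) q ^+ #|G| * 'C(#|sources G|, k)%:R) *
  (k`!%:R * r ^+ k) <= Z.
Proof.
have IF_gt0 := insertion_factor_gt0 k.
rewrite -(ler_pM2r IF_gt0) -sum_source_weight_card.
apply: (@le_trans _ _ (Z *+ 'C(n, k) * (k`!%:R * r ^+ k))).
  rewrite mulrAC ler_wpM2r ?mulr_ge0 ?exprn_ge0 ?prob_of_odds_ge0 //.
  rewrite mulr_suml -[n in 'C(n, _)]card_ord -card_draws -sumr_const.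
  rewrite [X in _ <= X](eq_bigl (fun S : {set 'I_n} => #|S| == k)) => [|S];
    last by rewrite inE.
  by apply: ler_sum => S /eqP <-; apply: source_weight_card_le.
rewrite -[Z *+ _]mulr_natr -mulrA (mulrA 'C(n, k)%:R) -natrM bin_ffact ler_wpM2l //.
  by rewrite source_weight0 sumr_ge0 // => G _; rewrite exprn_ge0.
exact: ffact_le_insertion_factor.
Qed.

Lemma many_sources_weight_le (m k : nat) (c : R) : 0 <= c ->
  (forall i : 'I_k, c <= (m - i)%N%:R * r) ->
  (\sum_(G : digraph n | is_dag G && (m <= #|sources G|)%N) q ^+ #|G|) * c ^+ k <= Z.
Proof.
move=> c_ge0 c_le; apply: le_trans (binomial_moment_le k).
rewrite big_mkcondr mulr_suml [X in _ <= X]mulr_suml; apply: ler_sum => G _.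
case: ifP => [m_le|_];
  last by rewrite mul0r !mulr_ge0 ?exprn_ge0 ?ler0n ?prob_of_odds_ge0.
rewrite -mulrA ler_wpM2l ?exprn_ge0 // mulrA -natrM bin_ffact.
apply: (@le_trans _ _ ((m ^_ k)%:R * r ^+ k)).
  rewrite ffact_prod natr_prod -!prodr_const_ord -big_split /=.
  by apply: ler_prod => i _; rewrite c_ge0 c_le.
rewrite ler_wpM2r ?exprn_ge0 ?prob_of_odds_ge0 // ler_nat -!bin_ffact.
by rewrite leq_mul2r leq_bin2l ?orbT.
Qed.

End SourceMoments.

Section DProbTheory.
Variables (R : realType) (n : nat) (p : R).
Hypothesis p01 : 0 < p < 1.
Local Notation q := (p / (1 - p)).

Lemma odds_ge0 : 0 <= q.
Proof. by case/andP: p01 => p_gt0 p_lt1; rewrite divr_ge0 ?subr_ge0 ?ltW. Qed.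

Lemma oddsK : q / (1 + q) = p.
Proof.
case/andP: p01 => p_gt0 p_lt1; have p1_neq0 : 1 - p != 0 by rewrite subr_eq0 gt_eqF.
by field; rewrite p1_neq0 subrK oner_eq0.
Qed.

Lemma dag_weight_gt0 : 0 < \sum_(G : digraph n | is_dag G) dag_weight p G.
Proof.
have dag0 : is_dag (set0 : digraph n).
  by apply: (@ranked_dag _ _ (fun=> 0%N)) => x y; rewrite /adj inE.
rewrite (bigD1 set0) //= /dag_weight cards0 expr0 ltr_wpDr //.
by rewrite sumr_ge0 // => G _; rewrite exprn_ge0 ?odds_ge0.
Qed.

Lemma DProb_ge0 (A : pred (digraph n)) : 0 <= DProb p A.
Proof.
rewrite divr_ge0 ?(ltW dag_weight_gt0) ?sumr_ge0 // => G _.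
by rewrite exprn_ge0 ?odds_ge0.
Qed.

Lemma DProb_predC (A : pred (digraph n)) :
  DProb p A + DProb p [pred G | ~~ A G] = 1.
Proof.
by rewrite -mulrDl -(bigID A) /= divff // gt_eqF // dag_weight_gt0.
Qed.

Lemma DProb_sub (A B : pred (digraph n)) :
  (forall G, A G -> B G) -> DProb p A <= DProb p B.
Proof.
move=> AB; rewrite ler_wpM2r ?invr_ge0 ?(ltW dag_weight_gt0) // !big_mkcondr /=.
apply: ler_sum => G _; case AG: (A G); first by rewrite (AB G AG).
by case: (B G); rewrite ?exprn_ge0 ?odds_ge0.
Qed.

Lemma DProb_many_sources_le (m k : nat) :
  (forall i : 'I_k, 2 <= (m - i)%N%:R * p) ->
  DProb p (fun G : digraph n => (m <= #|sources G|)%N) <= 2 ^- k.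
Proof.
rewrite -oddsK => two_le.
have := many_sources_weight_le n odds_ge0 (ler0n _ 2) two_le.
rewrite source_weight0 oddsK => bound.
by rewrite ler_pdivrMr ?dag_weight_gt0 // mulrC ler_pdivlMr ?exprn_gt0.
Qed.

Lemma DProb_le1 (A : pred (digraph n)) : DProb p A <= 1.
Proof. by have := DProb_predC A; have := DProb_ge0 [pred G | ~~ A G]; lra. Qed.

Lemma sources_threshold (i : 'I_(Num.truncn (2 / p))) :
  2 <= (Num.truncn (5 / p) - i)%N%:R * p.
Proof.
case/andP: p01 => p_gt0 _.
set k := Num.truncn (2 / p) in i *; set m := Num.truncn (5 / p).
have m_gt : 5 / p < m.+1%:R := truncnS_gt _.
have k_le : k%:R <= 2 / p by rewrite truncn_le divr_ge0 ?ltW.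
have i_lt : i.+1%:R <= k%:R :> R by rewrite ler_nat ltn_ord.
have i_le_m : (i <= m)%N.
  apply: leq_trans (ltnW (ltn_ord i)) (le_truncn _).
  by rewrite ler_pM2r ?invr_gt0 ?ler_nat.
have gap : 3 / p <= (m - i)%N%:R.
  by rewrite natrB //; rewrite -natr1 in m_gt i_lt; lra.
have := ler_wpM2r (ltW p_gt0) gap; rewrite divfK ?gt_eqF //; lra.
Qed.

Lemma DProb_few_sources :
  1 - p / 2 <= DProb p (fun G : digraph n => (#|sources G|%:R : R) <= 5 / p).
Proof.
case/andP: p01 => p_gt0 _.
set k := Num.truncn (2 / p); set m := Num.truncn (5 / p).
set few := fun G : digraph n => (#|sources G|%:R : R) <= 5 / p.
have many_le := DProb_many_sources_le (m := m) (@sources_threshold).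
have exp_k : 2 ^- k <= p / 2.
  rewrite -[p / 2]invf_div lef_pV2 ?posrE ?exprn_gt0 ?divr_gt0 //.
  apply: le_trans (ltW (truncnS_gt (2 / p))) _.
  by rewrite -natrX ler_nat ltn_expl.
have not_few_many G : ~~ few G -> (m <= #|sources G|)%N.
  rewrite /few -ltNge => gt5; rewrite -(ler_nat R); apply: ltW.
  by apply: le_lt_trans gt5; rewrite truncn_le divr_ge0 ?ltW.
have := DProb_predC few; have := DProb_sub not_few_many; lra.
Qed.

End DProbTheory.

Unset Implicit Arguments.
Local Open Scope classical_set_scope.
Local Open Scope ring_scope.

Theorem mainTheorem6 (R : realType) (p : nat -> R) :
  (forall n, 0 < p n < 1) ->
  (fun n : nat => p n * ln (n%:R : R)) @ \oo --> (0:R) ->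
  (fun n : nat =>
     DProb (p n) (fun G : digraph n => (#|sources G|%:R : R) <= 5 / p n))
    @ \oo --> (1:R).
Proof.
move=> p01 plogn_to0; set c := 2 * ln (3%:R : R).
have c_gt0 : 0 < c by rewrite mulr_gt0 // ln_gt0 // ltr1n.
apply: (@squeeze_cvgr _ _ _ R (fun n => 1 - c^-1 * (p n * ln n%:R)) (fun=> 1)).
- near=> n.
  have n_ge3 : (3 <= n)%N by near: n; exists 3%N.
  rewrite DProb_le1 // andbT; apply: le_trans (DProb_few_sources _ (p01 n)).
  have [p_gt0 _] := andP (p01 n).
  rewrite lerD2l lerN2 [leRHS]mulrC ler_pdivlMr //.
  have -> : p n / 2 * c = p n * ln 3%:R by rewrite /c; field.
  by rewrite ler_pM2l // ler_ln ?posrE ?ltr0n ?ler_nat //; apply: leq_trans n_ge3.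
- have lower_to1 := cvgB (cvg_cst (1 : R)) (cvgMl_tmp (a := c^-1) plogn_to0).
  rewrite mulr0 subr0 in lower_to1; exact: lower_to1.
- exact: cvg_cst.
Unshelve. all: end_near.
Qed.
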